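(* Let $p < q$ be primes and $n = pq$. Then the line graph $L(\Gamma(\mathbb{Z}_n))$ is very cost effective.
   Context: $\mathbb{Z}_n$ is the ring of residue classes modulo $n$. The zero-divisor graph $\Gamma(\mathbb{Z}_n)$ has as vertices the nonzero zero-divisors of $\mathbb{Z}_n$, two distinct vertices being adjacent iff their product is $0$. The line graph $L(G)$ of a simple graph $G$ has the edges of $G$ as vertices, two being adjacent iff the corresponding edges share an endpoint. For a graph $G=(V,E)$ and $S\subseteq V$, a vertex $v\in S$ is very cost effective if $|N(v)\cap S| < |N(v)\cap (V\setminus S)|$; $S$ is very cost effective if every vertex of $S$ is. A bipartition $\{S, V\setminus S\}$ is very cost effective if both parts are very cost effective, and $G$ is very cost effective if it has a very cost effective bipartition. *)

From mathcomp Require Import all_boot.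
Set Implicit Arguments. Unset Strict Implicit. Unset Printing Implicit Defensive.

(* A simple graph G = (V, E) is represented on an ambient finType T by a
   vertex set V : {set T} and an adjacency relation adj : rel T (only its
   restriction to V matters; adj is assumed symmetric and irreflexive on V
   for the graphs below, which holds by construction). *)

Definition nbhd (T : finType) (V : {set T}) (adj : rel T) (v : T) : {set T} :=
  [set u in V | adj v u].

Definition vce_vertex (T : finType) (V : {set T}) (adj : rel T)
    (S : {set T}) (v : T) : bool :=
  #|nbhd V adj v :&: S| < #|nbhd V adj v :&: (V :\: S)|.

Definition vce_set (T : finType) (V : {set T}) (adj : rel T) (S : {set T}) : bool :=
  [forall v in S, vce_vertex V adj S v].

Definition vce_bipartition (T : finType) (V : {set T}) (adj : rel T)
    (S : {set T}) : bool :=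
  [&& S \subset V, S != set0, V :\: S != set0,
      vce_set V adj S & vce_set V adj (V :\: S)].

Definition very_cost_effective (T : finType) (V : {set T}) (adj : rel T) : Prop :=
  exists S : {set T}, vce_bipartition V adj S.

Definition zmul (n : nat) (x y : 'I_n) : nat := (x * y) %% n.

Definition zd_vertices (n : nat) : {set 'I_n} :=
  [set x : 'I_n | (val x != 0) && [exists y : 'I_n, (val y != 0) && (zmul x y == 0)]].

Definition zd_adj (n : nat) : rel 'I_n := fun x y => (x != y) && (zmul x y == 0).

Definition line_vertices (T : finType) (V : {set T}) (adj : rel T) : {set {set T}} :=
  [set e : {set T} | [exists x in V, exists y in V,
      (x != y) && adj x y && (e == [set x; y])]].

Definition line_adj (T : finType) : rel {set T} :=
  fun e f => (e != f) && (e :&: f != set0).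

Definition zero_divisor_line_graph_vce (n : nat) : Prop :=
  very_cost_effective (line_vertices (zd_vertices n) (@zd_adj n)) (@line_adj _).

From mathcomp Require Import all_boot zify.
Set Implicit Arguments. Unset Strict Implicit. Unset Printing Implicit Defensive.

(* The nonzero zero-divisors of Z_pq are the nonzero multiples of p and of q,
   and Gamma(Z_pq) is the complete bipartite graph between these two classes
   A (of size q - 1) and B (of size p - 1).  Its line graph is the rook's graph
   on A x B: the edge {a, b} is adjacent to the {a, b'} and the {a', b}.
   Cut A into two halves, which is possible because q is odd, and B into two
   halves of sizes differing by at most one; call an edge crossing if its ends
   lie on different sides of the cut, and let S be the set of crossing edges.
   A neighbour {a, b'} of {a, b} lies in the same part as {a, b} exactly when
   b' lies on the same side as b.  Hence {a, b} has (side(a) - 1) + (side(b) - 1)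
   neighbours in its own part and other(a) + other(b) in the other one, and the
   balance of the cut makes the latter strictly larger. *)

Lemma imsetIdE (aT rT : finType) (f : aT -> rT) (X : {set aT}) (Y : {set rT}) :
  f @: [set x in X | f x \in Y] = f @: X :&: Y.
Proof.
apply/setP => y; apply/imsetP/setIP => [[x] | [/imsetP[x xX ->] fxY]].
  by rewrite inE => /andP[xX fxY] ->; split; first exact: imset_f.
by exists x; rewrite // inE xX.
Qed.

Lemma exists_subset_card (T : finType) (A : {set T}) k :
  k <= #|A| -> exists2 B : {set T}, B \subset A & #|B| = k.
Proof.
case/card_geqP => s [uniq_s <- sA]; exists [set x in s].
  by apply/subsetP => x; rewrite inE => /sA.
by rewrite cardsE (card_uniqP uniq_s).
Qed.

Lemma exists_halving_cut (T : finType) (A B : {set T}) : [disjoint A & B] ->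
  exists C : {set T}, #|A :&: C| = #|A|./2 /\ #|B :&: C| = #|B|./2.
Proof.
move=> disjAB.
have half_le m : m./2 <= m by lia.
have [CA sCA <-] := exists_subset_card (half_le #|A|).
have [CB sCB <-] := exists_subset_card (half_le #|B|).
exists (CA :|: CB); rewrite !setIUr (setIidPr sCA) (setIidPr sCB).
rewrite (disjoint_setI0 (disjointWr sCB disjAB)).
rewrite (disjoint_setI0 (disjointWr sCA _)) ?setU0 ?set0U //.
by rewrite disjoint_sym.
Qed.

Definition crossing (T : finType) (C e : {set T}) : bool :=
  ~~ (e \subset C) && ~~ (e \subset ~: C).

Lemma crossing_set2 (T : finType) (C : {set T}) a b :
  crossing C [set a; b] = ((a \in C) != (b \in C)).
Proof.
by rewrite /crossing !subUset !sub1set !inE; case: (a \in C); case: (b \in C).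
Qed.

Section CutSides.

Variables (T : finType) (C X : {set T}) (x : T).
Hypothesis xX : x \in X.

Lemma card_same_side :
  #|[set y in X :\ x | (y \in C) == (x \in C)]|.+1 =
  if x \in C then #|X :&: C| else #|X :\: C|.
Proof.
case xC: (x \in C); rewrite [in RHS](cardsD1 x) !inE xX xC add1n; congr (_.+1);
  by apply: eq_card => y; rewrite !inE; case: (y != x); case: (y \in X); case: (y \in C).
Qed.

Lemma card_other_side :
  #|[set y in X :\ x | (y \in C) != (x \in C)]| =
  if x \in C then #|X :\: C| else #|X :&: C|.
Proof.
case xC: (x \in C); apply: eq_card => y; rewrite !inE;
  case: (eqVneq y x) => [-> | _]; rewrite ?xC ?andbF //;
  by case: (y \in C); case: (y \in X).
Qed.

End CutSides.

Section UnfriendlyColouring.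

Variables (T : finType) (V : {set T}) (adj : rel T) (colour : T -> bool).

Lemma nbhd_setIdV w (P : pred T) :
  nbhd V adj w :&: [set x in V | P x] = nbhd V adj w :&: [set x | P x].
Proof. by apply/setP => x; rewrite !inE; case: (x \in V); case: (P x). Qed.

Lemma nbhd_setDV w (P : pred T) :
  nbhd V adj w :&: (V :\: [set x in V | P x]) = nbhd V adj w :&: [set x | ~~ P x].
Proof. by apply/setP => x; rewrite !inE; case: (x \in V); case: (P x). Qed.

Lemma unfriendly_colour_vce_bipartition u v :
  u \in V -> v \in V -> colour u -> ~~ colour v ->
  (forall w, w \in V ->
     #|nbhd V adj w :&: [set x | colour x == colour w]| <
     #|nbhd V adj w :&: [set x | colour x != colour w]|) ->
  vce_bipartition V adj [set x in V | colour x].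
Proof.
move=> uV vV cu ncv unfriendly.
apply/and5P; split.
- by apply/subsetP => x; rewrite inE => /andP[].
- by apply/set0Pn; exists u; rewrite inE uV.
- by apply/set0Pn; exists v; rewrite !inE vV ncv.
- apply/forall_inP => w; rewrite inE => /andP[wV cw].
  rewrite /vce_vertex nbhd_setIdV nbhd_setDV.
  have := unfriendly w wV; rewrite cw.
  by congr (_ < _); apply: eq_card => x; rewrite !inE ?eqb_id.
- apply/forall_inP => w; rewrite !inE => /andP[ncw wV].
  rewrite wV /= in ncw; rewrite /vce_vertex.
  have -> : V :\: (V :\: [set x in V | colour x]) = [set x in V | colour x].
    by rewrite setDDr setDv set0U; apply/setIidPr/subsetP => x; rewrite inE => /andP[].
  rewrite nbhd_setIdV nbhd_setDV.
  have := unfriendly w wV; rewrite (negbTE ncw).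
  by congr (_ < _); apply: eq_card => x; rewrite !inE eqbF_neg ?negbK.
Qed.

End UnfriendlyColouring.

Section LineGraphCompleteBipartite.

Variables (T : finType) (A B : {set T}) (adj : rel T).
Hypothesis disjAB : [disjoint A & B].
Hypothesis adjAB : {in A :|: B &, forall x y,
  adj x y = (x \in A) && (y \in B) || (x \in B) && (y \in A)}.

Local Notation L := (line_vertices (A :|: B) adj).
Local Notation N := (nbhd L (@line_adj T)).

Lemma neq_bipartite a b : a \in A -> b \in B -> a != b.
Proof. by move=> aA; apply: contraTneq => <-; rewrite (disjointFr disjAB aA). Qed.

Lemma eq_set2_bipartite a a' b b' : a \in A -> a' \in A -> b \in B -> b' \in B ->
  ([set a; b] == [set a'; b']) = (a == a') && (b == b').
Proof.
move=> aA a'A bB b'B; apply/eqP/andP => [E | [/eqP-> /eqP->]] //.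
have : a \in [set a'; b'] by rewrite -E set21.
have : b \in [set a'; b'] by rewrite -E set22.
rewrite !inE (eq_sym b) (negbTE (neq_bipartite a'A bB)) (negbTE (neq_bipartite aA b'B)) orbF /=.
by move=> -> ->.
Qed.

Lemma meet_set2_bipartite a a' b b' : a \in A -> a' \in A -> b \in B -> b' \in B ->
  ([set a; b] :&: [set a'; b'] != set0) = (a == a') || (b == b').
Proof.
move=> aA a'A bB b'B; apply/set0Pn/orP => [[x] | [/eqP<- | /eqP<-]].
- rewrite !inE => /andP[/orP[]/eqP-> /orP[]]; first by left.
  + by rewrite (negbTE (neq_bipartite aA b'B)).
  + by rewrite eq_sym (negbTE (neq_bipartite a'A bB)).
  + by right.
- by exists a; rewrite !inE eqxx.
- by exists b; rewrite !inE eqxx !orbT.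
Qed.

Lemma line_vertices_bipartite : L = [set [set a; b] | a in A, b in B].
Proof.
apply/setP => e; rewrite inE; apply/exists_inP/imset2P.
- case=> x xV /exists_inP[y yV /andP[/andP[_]]].
  rewrite adjAB // => /orP[]/andP[xA yB] /eqP->; first by exists x y.
  by exists y x; rewrite // setUC.
- case=> a b aA bB ->; exists a; first by rewrite inE aA.
  apply/exists_inP; exists b; first by rewrite inE bB orbT.
  by rewrite neq_bipartite // adjAB ?inE ?aA ?bB ?orbT //= eqxx.
Qed.

Lemma mem_line_bipartite a b : a \in A -> b \in B -> [set a; b] \in L.
Proof. by move=> aA bB; rewrite line_vertices_bipartite; apply: imset2_f. Qed.

Lemma nbhd_line_bipartite a b : a \in A -> b \in B ->
  N [set a; b] = [set [set a; b'] | b' in B :\ b] :|: [set [set a'; b] | a' in A :\ a].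
Proof.
move=> aA bB; apply/setP => e; rewrite /nbhd line_vertices_bipartite !inE.
apply/andP/orP => [[/imset2P[a' b' a'A b'B ->]] | ].
  rewrite /line_adj eq_set2_bipartite // meet_set2_bipartite //.
  case: (eqVneq a' a) => [-> | a'a]; case: (eqVneq b' b) => [-> | b'b] //= _.
    by left; apply: imset_f; rewrite !inE b'b.
  by right; apply: imset_f; rewrite !inE a'a.
case=> /imsetP[y]; rewrite !inE => /andP[yb yX] ->; split.
- exact: imset2_f.
- by rewrite /line_adj eq_set2_bipartite // meet_set2_bipartite // eqxx (eq_sym b) (negbTE yb).
- exact: imset2_f.
- by rewrite /line_adj eq_set2_bipartite // meet_set2_bipartite // eqxx (eq_sym a) (negbTE yb).
Qed.

Lemma card_nbhd_line_bipartite a b (Y : {set {set T}}) : a \in A -> b \in B ->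
  #|N [set a; b] :&: Y| =
  #|[set b' in B :\ b | [set a; b'] \in Y]| + #|[set a' in A :\ a | [set a'; b] \in Y]|.
Proof.
move=> aA bB; rewrite nbhd_line_bipartite // setIUl -!imsetIdE cardsU.
have -> : [set [set a; b'] | b' in [set b' in B :\ b | [set a; b'] \in Y]] :&:
          [set [set a'; b] | a' in [set a' in A :\ a | [set a'; b] \in Y]] = set0.
  apply/setP => e; rewrite !inE; apply/negP => /andP[].
  case/imsetP=> y; rewrite !inE => /andP[/andP[_ yB] _] ->.
  case/imsetP=> x; rewrite !inE => /andP[/andP[xa xA] _] /eqP.
  by rewrite eq_set2_bipartite // eq_sym (negbTE xa).
rewrite cards0 subn0 !card_in_imset // => [x y | x y]; rewrite !inE.
  move=> /andP[/andP[_ xA] _] /andP[/andP[_ yA] _] /eqP.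
  by rewrite eq_set2_bipartite // eqxx andbT => /eqP.
move=> /andP[/andP[_ xB] _] /andP[/andP[_ yB] _] /eqP.
by rewrite eq_set2_bipartite // eqxx => /eqP.
Qed.

Variable C : {set T}.
Hypothesis balancedA : #|A :&: C| = #|A :\: C|.
Hypothesis balancedB : #|B :&: C| <= #|B :\: C| <= #|B :&: C|.+1.

Lemma crossing_unfriendly e : e \in L ->
  #|N e :&: [set f | crossing C f == crossing C e]| <
  #|N e :&: [set f | crossing C f != crossing C e]|.
Proof.
move=> eL; have /imset2P[a b aA bB ->] : e \in [set [set a; b] | a in A, b in B].
  by rewrite -line_vertices_bipartite.
rewrite !card_nbhd_line_bipartite //.
have crossB y : (crossing C [set a; y] == crossing C [set a; b]) = ((y \in C) == (b \in C)).
  by rewrite !crossing_set2; case: (a \in C); case: (b \in C); case: (y \in C).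
have crossA y : (crossing C [set y; b] == crossing C [set a; b]) = ((y \in C) == (a \in C)).
  by rewrite !crossing_set2; case: (a \in C); case: (b \in C); case: (y \in C).
set sameB := [set y in B :\ b | _]; set sameA := [set y in A :\ a | _].
set otherB := [set y in B :\ b | _]; set otherA := [set y in A :\ a | _].
have -> : #|sameB| = #|[set y in B :\ b | (y \in C) == (b \in C)]|.
  by apply: eq_card => y; rewrite !inE crossB.
have -> : #|sameA| = #|[set y in A :\ a | (y \in C) == (a \in C)]|.
  by apply: eq_card => y; rewrite !inE crossA.
have -> : #|otherB| = #|[set y in B :\ b | (y \in C) != (b \in C)]|.
  by apply: eq_card => y; rewrite !inE crossB.
have -> : #|otherA| = #|[set y in A :\ a | (y \in C) != (a \in C)]|.
  by apply: eq_card => y; rewrite !inE crossA.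
have := card_same_side C aA; have := card_same_side C bB.
rewrite !card_other_side //.
by case: (a \in C); case: (b \in C); lia.
Qed.

Lemma crossing_vce_bipartition : 0 < #|A| -> 0 < #|B| ->
  vce_bipartition L (@line_adj T) [set e in L | crossing C e].
Proof.
move=> A_gt0 /card_gt0P[b bB].
have /card_gt0P[a1] : 0 < #|A :&: C| by move: A_gt0; rewrite -(cardsID C A); lia.
have /card_gt0P[a2] : 0 < #|A :\: C| by move: A_gt0; rewrite -(cardsID C A); lia.
rewrite !inE => /andP[a2C a2A] /andP[a1A a1C].
have cross1 : crossing C [set a1; b] = ~~ (b \in C) by rewrite crossing_set2 a1C.
have cross2 : crossing C [set a2; b] = (b \in C).
  by rewrite crossing_set2 (negbTE a2C); case: (b \in C).
have L1 := mem_line_bipartite a1A bB; have L2 := mem_line_bipartite a2A bB.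
case bC: (b \in C).
  by apply: (unfriendly_colour_vce_bipartition L2 L1); rewrite ?cross1 ?cross2 ?bC //;
    exact: crossing_unfriendly.
by apply: (unfriendly_colour_vce_bipartition L1 L2); rewrite ?cross1 ?cross2 ?bC //;
  exact: crossing_unfriendly.
Qed.

End LineGraphCompleteBipartite.

Lemma line_complete_bipartite_vce (T : finType) (A B : {set T}) (adj : rel T) :
  [disjoint A & B] ->
  {in A :|: B &, forall x y,
    adj x y = (x \in A) && (y \in B) || (x \in B) && (y \in A)} ->
  ~~ odd #|A| -> 0 < #|A| -> 0 < #|B| ->
  very_cost_effective (line_vertices (A :|: B) adj) (@line_adj T).
Proof.
move=> disjAB adjAB evenA A_gt0 B_gt0.
have [C [AC BC]] := exists_halving_cut disjAB.
exists [set e in line_vertices (A :|: B) adj | crossing C e].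
by apply: (crossing_vce_bipartition disjAB adjAB); rewrite // cardsD ?AC ?BC; lia.
Qed.

Definition nz_multiples (n d : nat) : {set 'I_n} :=
  [set x : 'I_n | (val x != 0) && (d %| val x)].

Lemma card_nz_multiples n d : #|nz_multiples n d| = n.-1 %/ d.
Proof.
case: n => [|n]; first by rewrite div0n; apply: eq_card0 => -[].
rewrite divn_count_dvd -sum1dep_card big_mkcond /=.
rewrite -(big_mkord xpredT (fun i => if (i != 0) && (d %| i) then 1 else 0)) big_ltn //=.
by apply: eq_big_nat => i /andP[i_gt0 _]; rewrite -lt0n i_gt0; case: (d %| i).
Qed.

Section TwoPrimes.

Variables p q : nat.
Hypotheses (p_pr : prime p) (q_pr : prime q) (neq_pq : p != q).

Local Notation n := (p * q).

Lemma coprime_pq : coprime p q.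
Proof. by rewrite prime_coprime // dvdn_prime2. Qed.

Lemma ndvdn_pq x : 0 < x < n -> ~~ ((p %| x) && (q %| x)).
Proof.
case/andP=> x_gt0 x_lt_n; rewrite -Gauss_dvd ?coprime_pq //.
by apply/negP => /dvdn_leq; lia.
Qed.

Lemma dvdn_pq_mul x y : 0 < x < n -> 0 < y < n ->
  (n %| x * y) = (p %| x) && (q %| y) || (q %| x) && (p %| y).
Proof.
move=> /ndvdn_pq ndx /ndvdn_pq ndy; rewrite Gauss_dvd ?coprime_pq // !Euclid_dvdM //.
by move: ndx ndy; case: (p %| x); case: (q %| x); case: (p %| y); case: (q %| y).
Qed.

Lemma zd_vertices_pq : zd_vertices n = nz_multiples n p :|: nz_multiples n q.
Proof.
have p_lt_n : p < n by rewrite ltn_Pmulr ?prime_gt1 ?prime_gt0.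
have q_lt_n : q < n by rewrite ltn_Pmull ?prime_gt1 ?prime_gt0.
have bounds (z : 'I_n) : val z != 0 -> 0 < z < n by rewrite lt0n => ->; exact: ltn_ord.
apply/setP => x; rewrite !inE; case: (eqVneq (val x) 0) => //= /bounds x_bounds.
apply/existsP/orP => [[y /andP[/bounds y_bounds]] | [px | qx]].
- rewrite /zmul -/(dvdn _ _) dvdn_pq_mul //.
  by case/orP=> /andP[dx _]; [left | right].
- exists (Ordinal q_lt_n); rewrite /= -lt0n prime_gt0 //.
  by rewrite /zmul -/(dvdn _ _) dvdn_pq_mul //= ?prime_gt0 ?q_lt_n ?px ?dvdnn.
- exists (Ordinal p_lt_n); rewrite /= -lt0n prime_gt0 //.
  by rewrite /zmul -/(dvdn _ _) dvdn_pq_mul //= ?prime_gt0 ?p_lt_n ?qx ?dvdnn ?orbT.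
Qed.

Lemma disjoint_nz_multiples_pq : [disjoint nz_multiples n p & nz_multiples n q].
Proof.
rewrite -setI_eq0; apply/eqP/setP => x; rewrite !inE.
apply/negP => /andP[/andP[x_neq0 px] /andP[_ qx]].
by move: (ndvdn_pq (x := x)); rewrite px qx lt0n x_neq0 ltn_ord => /(_ isT).
Qed.

Lemma zd_adj_pq : {in nz_multiples n p :|: nz_multiples n q &, forall x y,
  zd_adj x y = (x \in nz_multiples n p) && (y \in nz_multiples n q) ||
               (x \in nz_multiples n q) && (y \in nz_multiples n p)}.
Proof.
move=> x y; rewrite !inE -!andb_orr => /andP[x_neq0 _] /andP[y_neq0 _].
rewrite /zd_adj /zmul -/(dvdn _ _) dvdn_pq_mul ?lt0n ?x_neq0 ?y_neq0 ?ltn_ord //=.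
case: (eqVneq x y) => [<- | //]; move: (ndvdn_pq (x := x)).
by rewrite lt0n x_neq0 ltn_ord => /(_ isT); case: (p %| x); case: (q %| x).
Qed.

End TwoPrimes.

Theorem mainTheorem4 (p q : nat) :
  prime p -> prime q -> p < q ->
  very_cost_effective
    (line_vertices (zd_vertices (p * q)) (@zd_adj (p * q)))
    (@line_adj 'I_(p * q)).
Proof.
move=> p_pr q_pr lt_pq; have neq_pq : p != q by rewrite ltn_eqF.
have p_gt1 := prime_gt1 p_pr; have q_gt1 := prime_gt1 q_pr.
have card_p : #|nz_multiples (p * q) p| = q.-1.
  by rewrite card_nz_multiples divn_pred mulKn ?prime_gt0 // dvdn_mulr ?subn1.
have card_q : #|nz_multiples (p * q) q| = p.-1.
  by rewrite card_nz_multiples divn_pred mulnK ?prime_gt0 // dvdn_mull ?subn1.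
have q_odd : odd q by case: (even_prime q_pr) => // q2; lia.
rewrite zd_vertices_pq //; apply: line_complete_bipartite_vce.
- exact: disjoint_nz_multiples_pq.
- exact: zd_adj_pq.
- by rewrite card_p; lia.
- by rewrite card_p; lia.
- by rewrite card_q; lia.
Qed.
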